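(* Let $\mathcal A$ be a well-structured abstract domain with abstraction and concretisation functions $\alpha:\mathcal Q\to\mathcal A$ and $\gamma:\mathcal A\to\mathcal Q$. Then there exist monotone maps $\alpha':\mathcal S(\mathcal H_V)\to\mathcal A$ and $\gamma':\mathcal A\to\mathcal S(\mathcal H_V)$ forming a Galois embedding (with $\mathcal S(\mathcal H_V)$ ordered by inclusion) such that $\alpha=\alpha'\circ\alpha_s$ and $\gamma=\gamma_s\circ\gamma'$.
   Context: Fix a finite set $V$ of quantum variables, each a qubit with state space $\mathcal H_q\cong\mathbb C^2$; $\mathcal H_V=\bigotimes_{q\in V}\mathcal H_q$. $\mathcal D(\mathcal H_V)$ is the set of partial density operators on $\mathcal H_V$ (positive operators of trace at most $1$); $\lceil\rho\rceil$ denotes the support of $\rho$. The concrete domain is $\mathcal Q=2^{\mathcal D(\mathcal H_V)}$ ordered by inclusion. A pair of monotone maps $(\alpha,\gamma)$ between posets is a Galois connection if $c\le\gamma(a)\iff\alpha(c)\le a$, and a Galois embedding if moreover $\alpha\circ\gamma=\mathrm{id}$. A complete lattice $(\mathcal A,\le_{\mathcal A},\vee,\wedge,\bot,\top)$ with monotone $\alpha:\mathcal Q\to\mathcal A$, $\gamma:\mathcal A\to\mathcal Q$ is a well-structured abstract domain if (a) $(\alpha,\gamma)$ is a Galois embedding, and (b) for any family $\rho_i\in\mathcal D(\mathcal H_V)$ and reals $x_i>0$ with $\sum_i x_i\rho_i\in\mathcal D(\mathcal H_V)$, $\alpha(\sum_i x_i\rho_i)=\bigvee_i\alpha(\rho_i)$,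 where $\alpha(\rho)=\alpha(\{\rho\})$. The subspace domain $\mathcal S(\mathcal H_V)$ is the set of all subspaces of $\mathcal H_V$ ordered by inclusion, with join $P\vee Q=\mathrm{span}(P\cup Q)$ and meet $\cap$; its functions are $\gamma_s(P)=\{\rho\in\mathcal D(\mathcal H_V):\lceil\rho\rceil\subseteq P\}$ and $\alpha_s(R)=\bigvee\{\lceil\rho\rceil:\rho\in R\}$. *)

From HB Require Import structures.
From mathcomp Require Import all_boot all_order all_algebra.
From mathcomp Require Import complex.
From mathcomp Require Import boolp classical_sets.
From mathcomp Require Import Rstruct.
Set Implicit Arguments. Unset Strict Implicit. Unset Printing Implicit Defensive.
Import Order.TTheory GRing.Theory Num.Theory.
Local Open Scope classical_set_scope.
Local Open Scope ring_scope.

Definition RR := Rdefinitions.R.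
Definition CC := (RR[i])%type.

(* The set V of qubit variables is a finite type; H_V = (C^2)^{(x) V} has
   dimension 2^|V|.  Vectors of H_V are column vectors 'cV[CC]_(Hdim V). *)
Definition Hdim (V : finType) : nat := (2 ^ #|V|)%N.
Definition Hvec (V : finType) := 'cV[CC]_(Hdim V).
Definition Hop (V : finType) := 'M[CC]_(Hdim V).

Definition adjmx m n (A : 'M[CC]_(m, n)) : 'M[CC]_(n, m) :=
  (map_mx (fun z : CC => conjc z) A)^T.

Definition positive_op V (rho : Hop V) : Prop :=
  forall v : Hvec V, 0 <= (adjmx v *m rho *m v) 0 0.

Definition is_pdo V (rho : Hop V) : Prop :=
  positive_op rho /\ \tr rho <= 1.

Definition pdo (V : finType) := {rho : Hop V | is_pdo rho}.

Definition subsp (V : finType) := {vspace Hvec V}.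

Definition supp V (rho : Hop V) : subsp V :=
  (<<[seq col i rho | i <- enum 'I_(Hdim V)]>>)%VS.

Definition is_lub T (le : T -> T -> Prop) (S : set T) (x : T) : Prop :=
  (forall y, S y -> le y x) /\ (forall z, (forall y, S y -> le y z) -> le x z).

Definition vs_le V (U W : subsp V) : Prop := (U <= W)%VS.

Definition alpha_s V (R : set (pdo V)) : subsp V :=
  xget 0%VS [set P | is_lub (@vs_le V) [set supp (proj1_sig rho) | rho in R] P].

Definition gamma_s V (P : subsp V) : set (pdo V) :=
  [set rho | (supp (proj1_sig rho) <= P)%VS].

Definition monotone_wrt X Y (leX : X -> X -> Prop) (leY : Y -> Y -> Prop)
  (f : X -> Y) : Prop := forall x1 x2, leX x1 x2 -> leY (f x1) (f x2).

Definition galois_connection X Y (leX : X -> X -> Prop) (leY : Y -> Y -> Prop)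
  (alpha : X -> Y) (gamma : Y -> X) : Prop :=
  forall c a, leX c (gamma a) <-> leY (alpha c) a.

Definition galois_embedding X Y (leX : X -> X -> Prop) (leY : Y -> Y -> Prop)
  (alpha : X -> Y) (gamma : Y -> X) : Prop :=
  galois_connection leX leY alpha gamma /\ forall a, alpha (gamma a) = a.

Definition complete_lattice d (A : porderType d) : Prop :=
  forall S : set A, exists x, is_lub (fun a b : A => (a <= b)%O) S x.

Definition well_structured V d (A : porderType d)
  (alpha : set (pdo V) -> A) (gamma : A -> set (pdo V)) : Prop :=
  [/\ complete_lattice A,
      monotone_wrt (@subset _) (fun a b : A => (a <= b)%O) alpha,
      monotone_wrt (fun a b : A => (a <= b)%O) (@subset _) gamma,
      galois_embedding (@subset _) (fun a b : A => (a <= b)%O) alpha gamma &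
      forall (k : nat) (rhos : 'I_k -> pdo V) (x : 'I_k -> RR)
             (sigma : pdo V),
        (forall i, 0 < x i) ->
        proj1_sig sigma = \sum_(i < k) ((x i)%:C)%C *: proj1_sig (rhos i) ->
        is_lub (fun a b : A => (a <= b)%O)
               [set alpha [set rhos i] | i in [set: 'I_k]]
               (alpha [set sigma])].

(* Well-structuredness says that alpha turns positive combinations of states
   into joins. Extended to all positive operators by normalisation,
   beta M := alpha {M / (1 + tr M)} is therefore invariant under positive
   scaling and maps sums to joins. By the parallelogram law
   (u + v)(u + v)* + (u - v)(u - v)* = 2 u u* + 2 v v*, the vectors u with
   beta (u u* ) <= T form a subspace, and the spectral decomposition of M shows
   that beta M is the join of beta (u u* ) over u in the support of M. So the
   abstraction of a state only depends on its support, alpha factors through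
   alpha_s as alpha' P := alpha (gamma_s P), and gamma' a := alpha_s (gamma a)
   is its upper adjoint. *)

From mathcomp Require Import all_boot all_order all_algebra.
From mathcomp Require Import complex boolp classical_sets Rstruct.
From mathcomp Require Import spectral ring.
Set Implicit Arguments. Unset Strict Implicit. Unset Printing Implicit Defensive.
Import Order.TTheory GRing.Theory Num.Theory.
Local Open Scope ring_scope.

Lemma adjmxD m n (A B : 'M[CC]_(m, n)) : adjmx (A + B) = adjmx A + adjmx B.
Proof. by rewrite /adjmx map_mxD linearD. Qed.

Lemma adjmxN m n (A : 'M[CC]_(m, n)) : adjmx (- A) = - adjmx A.
Proof. by apply/matrixP=> i j; rewrite !mxE rmorphN. Qed.

Lemma adjmxZ m n c (A : 'M[CC]_(m, n)) : adjmx (c *: A) = conjc c *: adjmx A.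
Proof. by apply/matrixP=> i j; rewrite !mxE rmorphM. Qed.

Lemma adjmx_delta n (i : 'I_n) : adjmx (delta_mx i 0 : 'cV[CC]_n) = delta_mx 0 i.
Proof.
rewrite /adjmx (_ : map_mx _ _ = delta_mx i 0) ?trmx_delta //.
by apply/matrixP=> a b; rewrite !mxE conjc_nat.
Qed.

Lemma conjc_ge0 (z : CC) : 0 <= z -> conjc z = z.
Proof. by move=> /ger0_real /RRe_real <-; rewrite conjc_real. Qed.

Lemma Re_ge0K (z : CC) : 0 <= z -> (complex.Re z)%:C%C = z.
Proof. by move=> /ger0_real /RRe_real. Qed.

Section Sesquilinear.
Variable n : nat.
Implicit Types (M : 'M[CC]_n) (u v w : 'cV[CC]_n).

Definition dotc u v : CC := (adjmx u *m v) 0 0.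
Definition mxform M u v : CC := (adjmx u *m M *m v) 0 0.
Definition psdmx M := forall v, 0 <= mxform M v v.
Definition rank1mx u : 'M[CC]_n := u *m adjmx u.

Lemma dotcE u v : dotc u v = \sum_i conjc (u i 0) * v i 0.
Proof. by rewrite /dotc !mxE; apply: eq_bigr => i _; rewrite !mxE. Qed.

Lemma dotcC u v : dotc v u = conjc (dotc u v).
Proof.
by rewrite !dotcE rmorph_sum /=; apply: eq_bigr => i _; rewrite rmorphM /= conjcK mulrC.
Qed.

Lemma dotc_eq0 u : (dotc u u == 0) = (u == 0).
Proof.
apply/idP/eqP => [|->]; last by rewrite dotcE big1 // => i _; rewrite !mxE mulr0.
rewrite dotcE psumr_eq0 => [/allP u0|i _]; last by rewrite mulrC mulcJ_ge0.
apply/matrixP => i j; rewrite ord1 mxE.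
by have /implyP/(_ isT) := u0 i (mem_index_enum _); rewrite mulf_eq0 conjc_eq0 orbb => /eqP.
Qed.

Lemma mxformDl M u u' v : mxform M (u + u') v = mxform M u v + mxform M u' v.
Proof. by rewrite /mxform adjmxD !mulmxDl mxE. Qed.
Lemma mxformDr M u v v' : mxform M u (v + v') = mxform M u v + mxform M u v'.
Proof. by rewrite /mxform !mulmxDr mxE. Qed.
Lemma mxformZl M c u v : mxform M (c *: u) v = conjc c * mxform M u v.
Proof. by rewrite /mxform adjmxZ -!scalemxAl mxE. Qed.
Lemma mxformZr M c u v : mxform M u (c *: v) = c * mxform M u v.
Proof. by rewrite /mxform -!scalemxAr mxE. Qed.
Lemma mxform_delta M i j : mxform M (delta_mx i 0) (delta_mx j 0) = M i j.
Proof. by rewrite /mxform adjmx_delta -rowE -colE !mxE. Qed.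

Lemma mxformDM M N u v : mxform (M + N) u v = mxform M u v + mxform N u v.
Proof. by rewrite /mxform mulmxDr mulmxDl mxE. Qed.
Lemma mxformZM c M u v : mxform (c *: M) u v = c * mxform M u v.
Proof. by rewrite /mxform -scalemxAr -scalemxAl mxE. Qed.
Lemma mxform_sumM k (F : 'I_k -> 'M[CC]_n) u v :
  mxform (\sum_j F j) u v = \sum_j mxform (F j) u v.
Proof.
elim/big_rec2: _ => [|j x M _ <-]; last by rewrite mxformDM.
by rewrite /mxform mulmx0 mul0mx mxE.
Qed.

Lemma mxform_rank1 w u v : mxform (rank1mx w) u v = dotc u w * dotc w v.
Proof. by rewrite /mxform /rank1mx !mulmxA -(mulmxA (adjmx u *m w)) [in LHS]mxE big_ord1. Qed.

Lemma rank1mxZ c u : rank1mx (c *: u) = (c * conjc c) *: rank1mx u.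
Proof. by rewrite /rank1mx adjmxZ -scalemxAl -scalemxAr scalerA. Qed.

Lemma rank1mx_parallelogram u v :
  rank1mx (u + v) + rank1mx (u - v) = 2%:R *: rank1mx u + 2%:R *: rank1mx v.
Proof.
rewrite /rank1mx !adjmxD !adjmxN !(mulmxDl, mulmxDr) !(mulmxN, mulNmx) opprK !scaler_nat.
by rewrite addrACA (addrACA (u *m _)) (addrACA (v *m _)) !subrr addr0 add0r !mulr2n.
Qed.

Lemma rank1mx_mul w v : rank1mx w *m v = dotc w v *: w.
Proof. by rewrite /rank1mx -mulmxA [adjmx w *m v]mx11_scalar mul_mx_scalar. Qed.

Lemma psdmx_rank1 w : psdmx (rank1mx w).
Proof. by move=> v; rewrite mxform_rank1 dotcC mulrC mulcJ_ge0. Qed.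

Lemma psdmxD M N : psdmx M -> psdmx N -> psdmx (M + N).
Proof. by move=> hM hN v; rewrite mxformDM addr_ge0. Qed.

Lemma psdmxZ c M : 0 <= c -> psdmx M -> psdmx (c *: M).
Proof. by move=> hc hM v; rewrite mxformZM mulr_ge0. Qed.

Lemma psdmx_sum k (F : 'I_k -> 'M[CC]_n) : (forall j, psdmx (F j)) -> psdmx (\sum_j F j).
Proof.
move=> hF; elim/big_rec: _ => [v|j M _]; last exact: psdmxD.
by rewrite /mxform mulmx0 mul0mx mxE.
Qed.

Lemma psdmx_diag_ge0 M i : psdmx M -> 0 <= M i i.
Proof. by move/(_ (delta_mx i 0)); rewrite mxform_delta. Qed.

Lemma psdmx_tr_ge0 M : psdmx M -> 0 <= \tr M.
Proof. by move=> hM; apply: sumr_ge0 => i _; apply: psdmx_diag_ge0. Qed.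

(* Polarization: the form is real at e_i + e_j and at e_i + 'i e_j. *)
Lemma psdmx_hermitian M : psdmx M -> forall i j, M j i = conjc (M i j).
Proof.
move=> hM i j.
have formE c : mxform M (delta_mx i 0 + c *: delta_mx j 0) (delta_mx i 0 + c *: delta_mx j 0)
    = M i i + c * M i j + conjc c * M j i + conjc c * c * M j j.
  by rewrite !(mxformDl, mxformDr, mxformZl, mxformZr) !mxform_delta; ring.
have real c := conjc_ge0 (hM (delta_mx i 0 + c *: delta_mx j 0)).
have conjcD (a b : CC) : conjc (a + b) = conjc a + conjc b by exact: rmorphD.
have conjcM (a b : CC) : conjc (a * b) = conjc a * conjc b by exact: rmorphM.
have conj_i : conjc 'i%C = - 'i%C :> CC by apply/eqP; rewrite eq_complex /= oppr0 !eqxx.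
have h1 := real 1; have h2 := real 'i%C.
rewrite formE !(conjcD, conjcM) conjcK conjc1 in h1.
rewrite formE !(conjcD, conjcM) conjcK conj_i in h2.
rewrite !(conjc_ge0 (psdmx_diag_ge0 _ hM)) in h1 h2.
have ii : 'i%C * 'i%C = -1 :> CC by rewrite -expr2 sqr_i.
have /eqP : (conjc (M i j) - M j i) * 2 = 0.
  set I := 'i%C : CC in h2 ii *.
  set a := M i i in h1 h2 *; set b := M j j in h1 h2 *.
  set x := M i j in h1 h2 *; set y := M j i in h1 h2 *.
  transitivity ((a + 1 * conjc x + 1 * conjc y + 1 * 1 * b - (a + 1 * x + 1 * y + 1 * 1 * b))
     + I * (a + - I * conjc x + I * conjc y + I * - I * b - (a + I * x + - I * y + - I * I * b))
     + (conjc x - conjc y + x - y) * (1 + I * I)); first by ring.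
  by rewrite h1 h2 ii !subrr mulr0 addr0 add0r mulr0.
by rewrite mulf_eq0 pnatr_eq0 orbF subr_eq0 => /eqP ->.
Qed.
End Sesquilinear.

Section PsdSupport.
Variable n : nat.
Implicit Types (M : 'M[CC]_n) (u v w : 'cV[CC]_n).

Lemma psdmx_spectral M : psdmx M ->
  exists (D : 'I_n -> CC) (w : 'I_n -> 'cV[CC]_n),
  [/\ M = \sum_j D j *: rank1mx (w j), forall j, 0 <= D j &
      forall l j, dotc (w l) (w j) = (l == j)%:R].
Proof.
move=> hM.
have herm : M \is hermsymmx.
  apply/is_hermitianmxP; rewrite expr0 scale1r; apply/matrixP => i j.
  by rewrite !mxE (psdmx_hermitian hM j i).
have /orthomx_spectralP := hermitian_normalmx herm.
set P := spectralmx M; set D := spectral_diag M => eM.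
have Pu : P \is unitarymx := spectral_unitarymx M.
rewrite invmx_unitary // in eM.
pose w j : 'cV[CC]_n := \col_i conjc (P j i).
have orth l j : dotc (w l) (w j) = (l == j)%:R.
  rewrite dotcE; have /matrixP /(_ l j) := unitarymxP Pu; rewrite !mxE => <-.
  by apply: eq_bigr => i _; rewrite !mxE conjcK.
have eM2 : M = \sum_j D 0 j *: rank1mx (w j).
  rewrite {1}eM mul_mx_diag; apply/matrixP => i k.
  rewrite !mxE summxE; apply: eq_bigr => j _.
  by rewrite !mxE big_ord1 !mxE conjcK; ring.
exists (fun j => D 0 j), w; split => // j.
have := hM (w j); rewrite {1}eM2 mxform_sumM (bigD1 j) //= big1 ?addr0.
  by rewrite mxformZM mxform_rank1 !orth eqxx !mulr1.
move=> l l_neq_j; rewrite mxformZM mxform_rank1 orth dotcC orth eq_sym (negbTE l_neq_j).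
by rewrite conjc0 !mul0r mulr0.
Qed.

Definition suppmx M : {vspace 'cV[CC]_n} := (<<[seq col i M | i <- enum 'I_n]>>)%VS.

Lemma span_ind (G : 'cV[CC]_n -> Prop) (X : seq 'cV[CC]_n) :
  G 0 -> (forall a u, G u -> G (a *: u)) -> (forall u v, G u -> G v -> G (u + v)) ->
  {in X, forall x, G x} -> {in <<X>>%VS, forall u, G u}.
Proof.
move=> G0 GZ GD GX u /(@coord_span _ _ _ (in_tuple X)) ->.
by apply: (big_ind G) => // i _; apply/GZ/GX/mem_nth.
Qed.

Lemma suppmxP M u : reflect (exists v, u = M *m v) (u \in suppmx M).
Proof.
apply: (iffP idP) => [|[v ->]].
  apply: (span_ind (G := fun u => exists v, u = M *m v)).
  - by exists 0; rewrite mulmx0.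
  - by move=> a _ [v ->]; exists (a *: v); rewrite scalemxAr.
  - by move=> _ _ [v ->] [v' ->]; exists (v + v'); rewrite mulmxDr.
  - by move=> _ /mapP [i _ ->]; exists (delta_mx i 0); rewrite colE.
have -> : M *m v = \sum_i v i 0 *: col i M.
  apply/matrixP => a b; rewrite !mxE summxE; apply: eq_bigr => i _.
  by rewrite !mxE ord1 mulrC.
by apply: rpred_sum => i _; apply/rpredZ/memv_span/map_f; rewrite mem_enum.
Qed.

Lemma suppmxZ c M : c != 0 -> suppmx (c *: M) = suppmx M.
Proof.
move=> c0; apply/vspaceP => u; apply/suppmxP/suppmxP => -[v ->].
  by exists (c *: v); rewrite -scalemxAl -scalemxAr.
by exists (c^-1 *: v); rewrite -scalemxAl -scalemxAr scalerA mulfV ?scale1r.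
Qed.

Lemma suppmx_rank1 u : suppmx (rank1mx u) = <[u]>%VS.
Proof.
apply/vspaceP => v; apply/suppmxP/vlineP => -[x ->].
  by exists (dotc u x); rewrite rank1mx_mul.
have [->|u_neq0] := eqVneq u 0; first by exists 0; rewrite scaler0 mulmx0.
exists ((x / dotc u u) *: u); rewrite -scalemxAr rank1mx_mul scalerA divfK //.
by rewrite dotc_eq0.
Qed.
End PsdSupport.

Section SubspaceDomain.
Variable V : finType.
Local Notation N := (Hdim V).
Implicit Types (M : 'M[CC]_N) (R : set (pdo V)) (P : subsp V).

Lemma tr_add1_gt0 M : psdmx M -> 0 < 1 + \tr M.
Proof. by move=> /psdmx_tr_ge0; apply: ltr_pwDl ltr01. Qed.

(* Dividing by [1 + \tr M] rather than [\tr M] keeps the factor positive for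
   [M = 0]; only the support of [nrmmx M] matters. *)
Definition nrmmx M : 'M[CC]_N := (1 + \tr M)^-1 *: M.

Lemma nrmmx_pdo M : psdmx M -> is_pdo (nrmmx M).
Proof.
move=> hM; have t1 := tr_add1_gt0 hM; split.
  by apply: psdmxZ hM; rewrite invr_ge0 ltW.
by rewrite mxtraceZ mulrC ler_pdivrMr // mul1r -subr_ge0 addrK ler01.
Qed.

Lemma pdo0 : is_pdo (0 : 'M[CC]_N).
Proof. by split; [move=> v; rewrite /mxform mulmx0 mul0mx mxE | rewrite mxtrace0 ler01]. Qed.

(* Junk value [0] outside D(H_V). *)
Definition pdo_of M : pdo V :=
  if pselect (is_pdo M) is left h then exist _ M h else exist _ 0 pdo0.

Lemma pdo_ofE M : is_pdo M -> proj1_sig (pdo_of M) = M.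
Proof. by rewrite /pdo_of; case: pselect. Qed.

Lemma pdo_of_nrmmx M : psdmx M -> proj1_sig (pdo_of (nrmmx M)) = nrmmx M.
Proof. by move=> /nrmmx_pdo /pdo_ofE. Qed.

Definition supp_join (l : seq (pdo V)) : subsp V := (\sum_(r <- l) supp (proj1_sig r))%VS.

Lemma supp_join_cons r l : supp_join (r :: l) = (supp (proj1_sig r) + supp_join l)%VS.
Proof. by rewrite /supp_join big_cons. Qed.

Definition in_set_seq R (l : seq (pdo V)) := forall r, List.In r l -> R r.

(* A family of supports can only strictly grow [N] times, so some finite
   subfamily already spans all of them. *)
Lemma exists_supp_join R : exists2 l, in_set_seq R l &
  forall r, R r -> (supp (proj1_sig r) <= supp_join l)%VS.
Proof.
apply: contrapT => no_join.
have grow m : exists2 l, in_set_seq R l & (m <= \dim (supp_join l))%N.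
  elim: m => [|m [l Rl le_m]]; first by exists [::].
  have : ~ (forall r, R r -> (supp (proj1_sig r) <= supp_join l)%VS).
    by move=> all_sub; apply: no_join; exists l.
  move=> /existsNP [r /not_implyP [Rr /negP not_sub]].
  exists (r :: l); first by move=> r' /= [<-|/Rl].
  rewrite supp_join_cons; apply: leq_ltn_trans le_m _.
  rewrite ltn_neqAle dimvS ?addvSr // andbT; apply: contra not_sub => /eqP eq_dim.
  have /eqP -> : supp_join l == (supp (proj1_sig r) + supp_join l)%VS.
    by rewrite -(dimv_leqif_eq (addvSr _ _)).2 eq_dim.
  exact: addvSl.
have [l _] := grow (\dim (fullv : subsp V)).+1.
by rewrite ltnNge dimvS ?subvf.
Qed.

Lemma supp_join_lub R l : in_set_seq R l ->
    (forall r, R r -> (supp (proj1_sig r) <= supp_join l)%VS) ->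
  is_lub (@vs_le V) [set supp (proj1_sig r) | r in R] (supp_join l).
Proof.
move=> Rl sub_l; split=> [_ [r Rr <-]|P ubP]; first exact: sub_l.
elim: l Rl {sub_l} => [|r l IHl] Rl; first by rewrite /vs_le /supp_join big_nil sub0v.
rewrite /vs_le supp_join_cons subv_add ubP /=; last by exists r => //; apply: Rl; left.
by apply: IHl => r' l_r'; apply: Rl; right.
Qed.

Lemma alpha_s_lub R : is_lub (@vs_le V) [set supp (proj1_sig r) | r in R] (alpha_s R).
Proof.
have [l Rl sub_l] := exists_supp_join R.
have lub_ex : exists P, is_lub (@vs_le V) [set supp (proj1_sig r) | r in R] P.
  by exists (supp_join l); apply: supp_join_lub.
exact: xgetPex lub_ex.
Qed.

Lemma alpha_sE R : exists2 l, in_set_seq R l & alpha_s R = supp_join l.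
Proof.
have [l Rl sub_l] := exists_supp_join R; exists l => //.
have [ub least] := alpha_s_lub R; have [ub_l least_l] := supp_join_lub Rl sub_l.
by apply/subv_anti; rewrite least ?least_l.
Qed.

Lemma alpha_s_ub R r : R r -> (supp (proj1_sig r) <= alpha_s R)%VS.
Proof. by move=> Rr; apply: (alpha_s_lub R).1; exists r. Qed.

Lemma alpha_s_least R P :
  (forall r, R r -> (supp (proj1_sig r) <= P)%VS) -> (alpha_s R <= P)%VS.
Proof. by move=> ubP; apply: (alpha_s_lub R).2 => _ [r Rr <-]; apply: ubP. Qed.

Lemma alpha_s_mono R R' : (R `<=` R')%classic -> (alpha_s R <= alpha_s R')%VS.
Proof. by move=> sRR'; apply: alpha_s_least => r /sRR'; apply: alpha_s_ub. Qed.

Lemma supp_nrmmx_rank1 u : supp (nrmmx (rank1mx u)) = <[u]>%VS.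
Proof.
rewrite [supp _]suppmxZ ?suppmx_rank1 //.
by rewrite invr_eq0; apply/lt0r_neq0/tr_add1_gt0/psdmx_rank1.
Qed.

Lemma alpha_s_gamma_s P : alpha_s (gamma_s P) = P.
Proof.
apply/subv_anti/andP; split; first by apply: alpha_s_least.
apply/subvP => u Pu; pose s := pdo_of (nrmmx (rank1mx u)).
have suppE : supp (proj1_sig s) = <[u]>%VS.
  by rewrite pdo_of_nrmmx ?supp_nrmmx_rank1 //; apply: psdmx_rank1.
have /subvP : (supp (proj1_sig s) <= alpha_s (gamma_s P))%VS.
  by apply: alpha_s_ub; rewrite /gamma_s /= suppE -memvE.
by apply; rewrite suppE memv_line.
Qed.
End SubspaceDomain.

Section WellStructured.
Variables (V : finType) (d : Order.disp_t) (A : porderType d)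
  (alpha : set (pdo V) -> A) (gamma : A -> set (pdo V)).
Hypothesis ws : well_structured alpha gamma.
Local Notation N := (Hdim V).
Local Notation le := (fun a b : A => (a <= b)%O).
Implicit Types (M : 'M[CC]_N) (u v : 'cV[CC]_N) (T : A).
Local Open Scope classical_set_scope.

Definition beta M : A := alpha [set pdo_of (nrmmx M)].

Lemma beta_lub k (Ms : 'I_k -> 'M[CC]_N) (c : 'I_k -> CC) :
  (forall i, psdmx (Ms i)) -> (forall i, 0 < c i) ->
  is_lub le [set beta (Ms i) | i in [set: 'I_k]] (beta (\sum_i c i *: Ms i)).
Proof.
move=> psdM c_gt0; have [_ _ _ _ lub_sum] := ws.
set S := \sum_i _.
have psdS : psdmx S by apply: psdmx_sum => i; apply: psdmxZ (ltW (c_gt0 i)) (psdM i).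
pose x i := c i * (1 + \tr (Ms i)) / (1 + \tr S).
have x_gt0 i : 0 < x i.
  by rewrite !mulr_gt0 ?invr_gt0 ?tr_add1_gt0.
apply: (lub_sum k _ (fun i => complex.Re (x i))).
  by move=> i; rewrite -ltcR (Re_ge0K (ltW (x_gt0 i))).
rewrite pdo_of_nrmmx // /nrmmx /S scaler_sumr; apply: eq_bigr => i _.
rewrite pdo_of_nrmmx // /nrmmx (Re_ge0K (ltW (x_gt0 i))) !scalerA; congr (_ *: _).
have trS_neq0 := lt0r_neq0 (tr_add1_gt0 psdS).
have trM_neq0 := lt0r_neq0 (tr_add1_gt0 (psdM i)).
by rewrite -/S /x; field; apply/andP.
Qed.

Lemma is_lub_ord1 (f : 'I_1 -> A) y : is_lub le [set f i | i in [set: 'I_1]] y -> y = f ord0.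
Proof.
move=> [ub least]; apply/le_anti/andP; split; last by apply: ub; exists ord0.
by apply: least => _ [i _ <-]; rewrite ord1.
Qed.

Lemma alpha_pdo (s : pdo V) : alpha [set s] = beta (proj1_sig s).
Proof.
have [_ _ _ _ lub_sum] := ws.
case: s => M [psdM trM] /=; have t1 := tr_add1_gt0 psdM.
have c_gt0 : 0 < complex.Re (1 + \tr M) by rewrite -ltcR (Re_ge0K (ltW t1)).
apply: is_lub_ord1 (lub_sum 1 (fun _ => pdo_of (nrmmx M)) _ _ (fun _ => c_gt0) _).
rewrite big_ord1 pdo_of_nrmmx // (Re_ge0K (ltW t1)) /nrmmx scalerA mulfV ?scale1r //.
exact: lt0r_neq0.
Qed.

(* [0] is the empty sum, so its abstraction is the empty join. *)
Lemma beta0 T : (beta 0 <= T)%O.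
Proof.
have := @beta_lub 0 _ (fun _ => 1) (fun _ => psdmx_rank1 0) (fun _ => ltr01).
by rewrite big_ord0 => -[_]; apply => y [i _ _]; have := ltn_ord i; rewrite ltn0.
Qed.

Lemma betaZ c M : 0 < c -> psdmx M -> beta (c *: M) = beta M.
Proof.
move=> c_gt0 psdM.
have := @beta_lub 1 (fun _ => M) (fun _ => c) (fun _ => psdM) (fun _ => c_gt0).
by rewrite big_ord1 => /is_lub_ord1.
Qed.

Lemma betaZ_le c M T : 0 <= c -> psdmx M -> (beta M <= T)%O -> (beta (c *: M) <= T)%O.
Proof.
move=> c_ge0 psdM; have [->|c_neq0] := eqVneq c 0; first by rewrite scale0r beta0.
by rewrite betaZ // lt_def c_neq0.
Qed.

Lemma beta_sum_lub k (F : 'I_k -> 'M[CC]_N) : (forall i, psdmx (F i)) ->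
  is_lub le [set beta (F i) | i in [set: 'I_k]] (beta (\sum_i F i)).
Proof.
move=> psdF; have := beta_lub psdF (fun _ => ltr01).
by under eq_bigr do rewrite scale1r.
Qed.

Lemma beta_add_lub M M' : psdmx M -> psdmx M' ->
  is_lub le [set beta M; beta M'] (beta (M + M')).
Proof.
move=> psdM psdM'; pose F (i : 'I_2) := if i == ord0 then M else M'.
have psdF i : psdmx (F i) by rewrite /F; case: ifP.
have [ub least] := beta_sum_lub psdF.
rewrite big_ord_recl big_ord1 /F /= in ub least.
split=> [_ [->|->]|T ubT]; first by apply: ub; exists ord0.
  by apply: ub; exists ord_max.
by apply: least => _ [i _ <-]; rewrite /F; case: ifP => _; apply: ubT; [left | right].
Qed.

Definition rank1_below T u := (beta (rank1mx u) <= T)%O.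

Lemma rank1_below0 T : rank1_below T 0.
Proof. by rewrite /rank1_below /rank1mx mul0mx beta0. Qed.

Lemma rank1_belowZ T a u : rank1_below T u -> rank1_below T (a *: u).
Proof. by rewrite /rank1_below rank1mxZ; apply: betaZ_le (mulcJ_ge0 _) (psdmx_rank1 _). Qed.

Lemma rank1_belowD T u v : rank1_below T u -> rank1_below T v -> rank1_below T (u + v).
Proof.
move=> below_u below_v; have two_ge0 : 0 <= 2%:R :> CC := ler0n _ 2.
have [ub _] := beta_add_lub (psdmx_rank1 (u + v)) (psdmx_rank1 (u - v)).
apply: le_trans (ub _ (or_introl erefl)) _; rewrite rank1mx_parallelogram.
have [_ least] := beta_add_lub (psdmxZ two_ge0 (psdmx_rank1 u)) (psdmxZ two_ge0 (psdmx_rank1 v)).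
by apply: least => _ [->|->]; apply: betaZ_le two_ge0 (psdmx_rank1 _) _.
Qed.

Lemma rank1_below_sum T k (F : 'I_k -> 'cV[CC]_N) :
  (forall i, rank1_below T (F i)) -> rank1_below T (\sum_i F i).
Proof.
by move=> below; apply: (big_ind (rank1_below T)); [apply: rank1_below0 | apply: rank1_belowD |].
Qed.

Lemma rank1_below_suppmx M u : psdmx M -> u \in suppmx M -> rank1_below (beta M) u.
Proof.
move=> psdM /suppmxP [v ->]; have [D [w [eM D_ge0 orth]]] := psdmx_spectral psdM.
have psdF j : psdmx (D j *: rank1mx (w j)) by apply: psdmxZ (D_ge0 j) (psdmx_rank1 _).
have -> : M *m v = \sum_j (D j * dotc (w j) v) *: w j.
  rewrite [in LHS]eM mulmx_suml; apply: eq_bigr => j _.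
  by rewrite -scalemxAl rank1mx_mul scalerA.
apply: rank1_below_sum => j.
have [->|Dj_neq0] := eqVneq (D j) 0; first by rewrite mul0r scale0r rank1_below0.
apply: rank1_belowZ.
rewrite /rank1_below -(betaZ (_ : 0 < D j) (psdmx_rank1 _)) ?lt_def ?Dj_neq0 ?D_ge0 //.
by rewrite eM; apply: (beta_sum_lub psdF).1; exists j.
Qed.

Lemma beta_le_suppmx M T : psdmx M ->
  {in suppmx M, forall u, rank1_below T u} -> (beta M <= T)%O.
Proof.
move=> psdM below; have [D [w [eM D_ge0 orth]]] := psdmx_spectral psdM.
have psdF j : psdmx (D j *: rank1mx (w j)) by apply: psdmxZ (D_ge0 j) (psdmx_rank1 _).
rewrite eM; apply: (beta_sum_lub psdF).2 => _ [j _ <-].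
have [->|Dj_neq0] := eqVneq (D j) 0; first by rewrite scale0r beta0.
rewrite betaZ ?lt_def ?Dj_neq0 ?D_ge0 //; last exact: psdmx_rank1.
apply: (below (w j)).
apply/suppmxP; exists ((D j)^-1 *: w j); rewrite -scalemxAr eM mulmx_suml.
rewrite (bigD1 j) //= big1 ?addr0 => [|l l_neq_j]; last first.
  by rewrite -scalemxAl rank1mx_mul orth (negbTE l_neq_j) scale0r scaler0.
by rewrite -scalemxAl rank1mx_mul orth eqxx scale1r scalerA mulVf ?scale1r.
Qed.

Lemma rank1_below_supp_join R l u :
  in_set_seq R l -> u \in supp_join l -> rank1_below (alpha R) u.
Proof.
have [_ alpha_mono _ _ _] := ws.
elim: l u => [|r l IHl] u Rl.
  by rewrite /supp_join big_nil memv0 => /eqP ->; apply: rank1_below0.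
rewrite supp_join_cons => /memv_addP [v supp_v [w supp_w ->]].
apply: rank1_belowD; last by apply: IHl => // r' l_r'; apply: Rl; right.
apply: le_trans (rank1_below_suppmx (proj2_sig r).1 supp_v) _.
by rewrite -alpha_pdo; apply: alpha_mono => _ ->; apply: Rl; left.
Qed.

Lemma alpha1_le_of_supp R s :
  (supp (proj1_sig s) <= alpha_s R)%VS -> (alpha [set s] <= alpha R)%O.
Proof.
move=> sub; have [l Rl alpha_sR] := alpha_sE R.
rewrite alpha_pdo; apply: beta_le_suppmx (proj2_sig s).1 _ => u supp_u.
by apply: rank1_below_supp_join Rl _; rewrite -alpha_sR; apply: (subvP sub).
Qed.

Lemma alpha_le_set1 R T : (forall r, R r -> (alpha [set r] <= T)%O) -> (alpha R <= T)%O.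
Proof.
have [_ _ _ [galois _] _] := ws.
by move=> below; apply/galois => r Rr; have /galois := below r Rr; apply.
Qed.

Lemma alpha_gamma_s_alpha_s R : alpha (gamma_s (alpha_s R)) = alpha R.
Proof.
have [_ alpha_mono _ _ _] := ws.
apply/le_anti/andP; split; last by apply: alpha_mono => r; apply: alpha_s_ub.
by apply: alpha_le_set1 => r; apply: alpha1_le_of_supp.
Qed.

Lemma gamma_s_alpha_s_gamma a : gamma_s (alpha_s (gamma a)) = gamma a.
Proof.
have [_ _ _ [galois alpha_gamma] _] := ws.
apply/seteqP; split => r; last exact: alpha_s_ub.
by move=> /alpha1_le_of_supp; rewrite alpha_gamma => /galois; apply.
Qed.

Lemma subspace_galois_connection : galois_connection (@vs_le V) le
  (fun P => alpha (gamma_s P)) (fun a => alpha_s (gamma a)).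
Proof.
have [_ _ _ [galois alpha_gamma] _] := ws.
move=> P a; split => [sub | /galois sub].
  rewrite -(alpha_gamma a); apply: alpha_le_set1 => r r_P.
  exact/alpha1_le_of_supp/(subv_trans r_P sub).
by rewrite /vs_le -(alpha_s_gamma_s P); apply: alpha_s_mono.
Qed.
End WellStructured.

Local Open Scope classical_set_scope.

Theorem mainTheorem3 (V : finType) (d : Order.disp_t) (A : porderType d)
    (alpha : set (pdo V) -> A) (gamma : A -> set (pdo V)) :
  well_structured alpha gamma ->
  exists (alpha' : subsp V -> A) (gamma' : A -> subsp V),
    [/\ monotone_wrt (@vs_le V) (fun a b : A => (a <= b)%O) alpha',
        monotone_wrt (fun a b : A => (a <= b)%O) (@vs_le V) gamma',
        galois_embedding (@vs_le V) (fun a b : A => (a <= b)%O) alpha' gamma',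
        (forall R : set (pdo V), alpha R = alpha' (alpha_s R)) &
        (forall a : A, gamma a = gamma_s (gamma' a))].
Proof.
move=> ws; have [_ alpha_mono gamma_mono [_ alpha_gamma] _] := ws.
exists (fun P => alpha (gamma_s P)), (fun a => alpha_s (gamma a)); split.
- by move=> P Q sPQ; apply: alpha_mono => r r_P; apply: subv_trans r_P sPQ.
- by move=> a b le_ab; apply/alpha_s_mono/gamma_mono.
- split; first exact: subspace_galois_connection ws.
  by move=> a; rewrite (alpha_gamma_s_alpha_s ws).
- by move=> R; rewrite (alpha_gamma_s_alpha_s ws).
- by move=> a; rewrite (gamma_s_alpha_s_gamma ws).
Qed.
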